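(* Let $\mathbb{E},\mathbb{F}$ be Euclidean spaces, $A\colon\mathbb{E}\to\mathbb{F}$ linear, $b\in\operatorname{Range}A$, $c\in\mathbb{E}$, and $\mathcal{K}\subseteq\mathbb{E}$ a closed convex cone with nonempty interior. Consider the primal problem $\inf\{\langle c,x\rangle: Ax=b,\ x\in\mathcal{K}\}$ and its dual $\sup\{\langle b,y\rangle: c-A^*y\in\mathcal{K}^*\}$. Suppose the primal problem is feasible with finite optimal value $\mathrm{val}$, and define $$\operatorname{cond}:=\min_{y\in\mathbb{F}:\ \|y\|=1}\ \max\{\operatorname{dist}_{\mathcal{K}^*}(A^*y),\ \langle b,y\rangle\}.$$ If $\operatorname{cond}\neq 0$, then every optimal solution $y$ of the dual problem satisfies $$\|y\|\le\frac{\max\{\|c\|,-\mathrm{val}\}}{\operatorname{cond}}.$$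
   Context: $\mathcal{K}^*:=\{z\in\mathbb{E}:\langle x,z\rangle\ge 0\ \forall x\in\mathcal{K}\}$ is the dual cone, $A^*$ the adjoint of $A$, and $\operatorname{dist}_{\mathcal{K}^*}(w)$ the Euclidean distance from $w$ to $\mathcal{K}^*$. *)

From HB Require Import structures.
From mathcomp Require Import all_boot all_order all_algebra.
From mathcomp Require Import all_classical all_reals all_analysis.
Set Implicit Arguments. Unset Strict Implicit. Unset Printing Implicit Defensive.
Import Order.TTheory GRing.Theory Num.Theory.
Import numFieldNormedType.Exports.
Local Open Scope classical_set_scope.
Local Open Scope ring_scope.

(* Euclidean space of dimension n modelled as row vectors 'rV[R]_n with the
   standard inner product. A linear map E -> F is a matrix A : 'M_(n,m)
   acting by x |-> x *m A; its adjoint is y |-> y *m A^T. *)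

Definition dotv (R : realType) (n : nat) (x y : 'rV[R]_n) : R :=
  \sum_(i < n) x 0 i * y 0 i.

Definition vnorm (R : realType) (n : nat) (x : 'rV[R]_n) : R :=
  Num.sqrt (dotv x x).

Definition dual_cone (R : realType) (n : nat) (K : set 'rV[R]_n) : set 'rV[R]_n :=
  [set z | forall x, K x -> 0 <= dotv x z].

Definition dist_set (R : realType) (n : nat) (S : set 'rV[R]_n) (w : 'rV[R]_n) : R :=
  inf [set vnorm (w - z) | z in S].

Definition is_cone (R : realType) (n : nat) (K : set 'rV[R]_n) : Prop :=
  forall x (t : R), K x -> 0 <= t -> K (t *: x).

Definition is_convex (R : realType) (n : nat) (K : set 'rV[R]_n) : Prop :=
  forall x y (t : R), K x -> K y -> 0 <= t <= 1 -> K (t *: x + (1 - t) *: y).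

Definition primal_feas (R : realType) (n m : nat) (A : 'M[R]_(n, m))
  (b : 'rV[R]_m) (K : set 'rV[R]_n) : set 'rV[R]_n :=
  [set x | x *m A = b /\ K x].

Definition primal_val (R : realType) (n m : nat) (A : 'M[R]_(n, m))
  (b : 'rV[R]_m) (c : 'rV[R]_n) (K : set 'rV[R]_n) : R :=
  inf [set dotv c x | x in primal_feas A b K].

Definition dual_feas (R : realType) (n m : nat) (A : 'M[R]_(n, m))
  (c : 'rV[R]_n) (K : set 'rV[R]_n) : set 'rV[R]_m :=
  [set y | dual_cone K (c - y *m A^T)].

Definition dual_optimal (R : realType) (n m : nat) (A : 'M[R]_(n, m))
  (b : 'rV[R]_m) (c : 'rV[R]_n) (K : set 'rV[R]_n) (y : 'rV[R]_m) : Prop :=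
  dual_feas A c K y /\ forall y', dual_feas A c K y' -> dotv b y' <= dotv b y.

(* cond := min over the unit sphere of max(dist_{K*}(A^* y), <b,y>).
   The minimum is attained (continuous function on a compact sphere), so it
   coincides with the infimum used here. *)
Definition cond (R : realType) (n m : nat) (A : 'M[R]_(n, m))
  (b : 'rV[R]_m) (K : set 'rV[R]_n) : R :=
  inf [set Num.max (dist_set (dual_cone K) (y *m A^T)) (dotv b y)
      | y in [set y : 'rV[R]_m | vnorm y = 1]].

(* Evaluating cond at the unit vector -y/|y| gives cond |y| <= max(|v|, -<b,y>)
   whenever v - A^* y lies in K^*; for a dual optimal y take v = c, so the bound
   reduces to the absence of a duality gap, val <= <b,y>.
   For that, consider the convex cone S = {(v, <b,y> - r) : v - A^* y in K^*, r >= 0}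
   in E x R: a point (c,t) lies in S iff some dual feasible y has <b,y> >= t. By the
   inequality above, cond > 0 bounds the parameters of the points of S close to
   (c,t), so (c,t) has a nearest point in S. If (c,t) is not in S, the normal vector
   of this projection is (-x, beta) with x in K (bipolar theorem, itself proved by
   projecting onto K), A x = beta b, beta >= 0 and <c,x> < beta t: either x/beta is
   a primal feasible point of cost below t, or x is a recession direction of
   decreasing cost. For t strictly between the dual and the primal value both
   alternatives are absurd. *)

From HB Require Import structures.
From mathcomp Require Import all_boot all_order all_algebra.
From mathcomp Require Import all_classical all_reals all_analysis.
From mathcomp Require Import ring lra.
Import Order.TTheory GRing.Theory Num.Theory.
Import numFieldNormedType.Exports.
Local Open Scope classical_set_scope.
Local Open Scope ring_scope.

Set Implicit Arguments. Unset Strict Implicit. Unset Printing Implicit Defensive.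

Section InnerProduct.
Variables (R : realType) (k : nat).
Implicit Types (x y z : 'rV[R]_k) (a : R).

Lemma dotvC x y : dotv x y = dotv y x.
Proof. by apply: eq_bigr => i _; rewrite mulrC. Qed.

Lemma dotvDl x y z : dotv (x + y) z = dotv x z + dotv y z.
Proof. by rewrite /dotv -big_split; apply: eq_bigr => i _; rewrite mxE mulrDl. Qed.

Lemma dotvZl a x z : dotv (a *: x) z = a * dotv x z.
Proof. by rewrite /dotv mulr_sumr; apply: eq_bigr => i _; rewrite mxE mulrA. Qed.

Lemma dotvNl x z : dotv (- x) z = - dotv x z.
Proof. by rewrite -scaleN1r dotvZl mulN1r. Qed.

Lemma dotvBl x y z : dotv (x - y) z = dotv x z - dotv y z.
Proof. by rewrite dotvDl dotvNl. Qed.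

Lemma dotv0l z : dotv 0 z = 0.
Proof. by rewrite -(scale0r 0) dotvZl mul0r. Qed.

Lemma dotvDr x y z : dotv z (x + y) = dotv z x + dotv z y.
Proof. by rewrite dotvC dotvDl !(dotvC z). Qed.

Lemma dotvZr a x z : dotv z (a *: x) = a * dotv z x.
Proof. by rewrite dotvC dotvZl dotvC. Qed.

Lemma dotvNr x z : dotv z (- x) = - dotv z x.
Proof. by rewrite dotvC dotvNl dotvC. Qed.

Lemma dotvBr x y z : dotv z (x - y) = dotv z x - dotv z y.
Proof. by rewrite dotvDr dotvNr. Qed.

Lemma dotv0r z : dotv z 0 = 0.
Proof. by rewrite dotvC dotv0l. Qed.

Lemma dotvv_ge0 x : 0 <= dotv x x.
Proof. by apply: sumr_ge0 => i _; rewrite -expr2 sqr_ge0. Qed.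

Lemma dotvv_eq0 x : dotv x x = 0 -> x = 0.
Proof.
move=> /eqP; rewrite /dotv psumr_eq0 => [/allP x0|i _]; last by rewrite -expr2 sqr_ge0.
by apply/rowP => j; rewrite mxE; apply/eqP; rewrite -sqrf_eq0 expr2; exact/x0/mem_index_enum.
Qed.

Lemma dotv_sqrB x y :
  dotv (x - y) (x - y) = dotv x x - 2 * dotv x y + dotv y y.
Proof. by rewrite !(dotvBl, dotvBr) (dotvC y x); ring. Qed.

Lemma vnorm_ge0 x : 0 <= vnorm x.
Proof. exact: sqrtr_ge0. Qed.

Lemma vnorm_sqr x : vnorm x ^+ 2 = dotv x x.
Proof. by rewrite sqr_sqrtr // dotvv_ge0. Qed.

Lemma vnorm_le x a : 0 <= a -> (vnorm x <= a) = (dotv x x <= a ^+ 2).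
Proof. by move=> a0; rewrite -vnorm_sqr ler_sqr // nnegrE vnorm_ge0. Qed.

Lemma vnorm_eq0 x : vnorm x = 0 -> x = 0.
Proof. by move=> x0; apply: dotvv_eq0; rewrite -vnorm_sqr x0 expr0n. Qed.

Lemma vnorm0 : vnorm (0 : 'rV[R]_k) = 0.
Proof. by rewrite /vnorm dotv0l sqrtr0. Qed.

Lemma vnormZ a x : vnorm (a *: x) = `|a| * vnorm x.
Proof. by rewrite /vnorm dotvZl dotvZr mulrA -expr2 sqrtrM ?sqr_ge0 // sqrtr_sqr. Qed.

Lemma vnormN x : vnorm (- x) = vnorm x.
Proof. by rewrite -scaleN1r vnormZ normrN normr1 mul1r. Qed.

Lemma cauchy_schwarz x y : dotv x y <= vnorm x * vnorm y.
Proof.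
have [x0|/eqP nx0] := eqVneq (vnorm x) 0.
  by rewrite (vnorm_eq0 x0) dotv0l vnorm0 mul0r.
have [y0|/eqP ny0] := eqVneq (vnorm y) 0.
  by rewrite (vnorm_eq0 y0) dotv0r vnorm0 mulr0.
have nxy : 0 < vnorm x * vnorm y.
  by rewrite mulr_gt0 // lt_def ?vnorm_ge0 ?andbT; apply/eqP.
have := dotvv_ge0 (vnorm y *: x - vnorm x *: y).
rewrite dotv_sqrB !(dotvZl, dotvZr) -!vnorm_sqr => h.
by rewrite -(ler_pM2l nxy); nra.
Qed.

Lemma vnormD x y : vnorm (x + y) <= vnorm x + vnorm y.
Proof.
rewrite vnorm_le ?addr_ge0 ?vnorm_ge0 // !(dotvDl, dotvDr) (dotvC y x).
by rewrite -!vnorm_sqr; have := cauchy_schwarz x y; nra.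
Qed.

Lemma mx_norm_le_vnorm x : `|x| <= vnorm x.
Proof.
rewrite [leLHS]/Num.norm /= mx_normrE; apply: bigmax_le => [|[i j] _ /=].
  exact: vnorm_ge0.
rewrite (ord1 i) -sqrtr_sqr ler_sqrt ?dotvv_ge0 // /dotv (bigD1 j) //= -expr2.
by rewrite lerDl; apply: sumr_ge0 => l _; rewrite -expr2 sqr_ge0.
Qed.

End InnerProduct.

Lemma dotv_mulmx (R : realType) n m (A : 'M[R]_(n, m)) x y :
  dotv (x *m A) y = dotv x (y *m A^T).
Proof.
rewrite /dotv; under eq_bigr do rewrite mxE big_distrl /=.
rewrite exchange_big /=; apply: eq_bigr => i _; rewrite mxE big_distrr /=.
by apply: eq_bigr => j _; rewrite mxE; ring.
Qed.

Section PairVectors.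
Variables (R : realType) (k : nat).
Implicit Types (x y : 'rV[R]_k) (a b : R).

Definition rV_pair x a : 'rV[R]_(k + 1) := row_mx x (const_mx a).

Lemma dotv_pair x y a b : dotv (rV_pair x a) (rV_pair y b) = dotv x y + a * b.
Proof.
rewrite /dotv big_split_ord big_ord1 /= /rV_pair !row_mxEr.
by under eq_bigr do rewrite !row_mxEl; rewrite !mxE.
Qed.

Lemma rV_pairD x y a b : rV_pair x a + rV_pair y b = rV_pair (x + y) (a + b).
Proof. by rewrite /rV_pair add_row_mx; congr row_mx; apply/rowP => i; rewrite !mxE. Qed.

Lemma rV_pairZ x a b : b *: rV_pair x a = rV_pair (b *: x) (b * a).
Proof. by rewrite /rV_pair scale_row_mx; congr row_mx; apply/rowP => i; rewrite !mxE. Qed.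

Lemma rV_pairB x y a b : rV_pair x a - rV_pair y b = rV_pair (x - y) (a - b).
Proof. by rewrite -scaleN1r rV_pairZ rV_pairD scaleN1r mulN1r. Qed.

Lemma rV_pair_inj x y a b : rV_pair x a = rV_pair y b -> x = y /\ a = b.
Proof. by move=> /eq_row_mx[-> /rowP /(_ ord0)]; rewrite !mxE. Qed.

End PairVectors.

Section ConeProjection.
Variables (R : realType) (k : nat).
Implicit Types (x d p s : 'rV[R]_k) (S : set 'rV[R]_k).

Lemma no_descent_dotv_le0 x d :
  (forall l, 0 < l <= 1 -> dotv x x <= dotv (x - l *: d) (x - l *: d)) ->
  dotv x d <= 0.
Proof.
move=> hmin; rewrite leNgt; apply/negP => xd0.
have dd0 := dotvv_ge0 d.
(* this step length lies in (0, 1] and strictly shortens x *)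
set l := dotv x d / (dotv x d + dotv d d).
have hl : l * (dotv x d + dotv d d) = dotv x d by rewrite mulfVK // gt_eqF //; lra.
have l0 : 0 < l by rewrite divr_gt0 //; lra.
have l1 : l <= 1 by rewrite ler_pdivrMr ?mul1r; lra.
have := hmin l; rewrite l0 l1 dotv_sqrB !(dotvZl, dotvZr) => /(_ isT) h.
have : l * (2 * dotv x d) <= l * (l * dotv d d) by nra.
by rewrite ler_pM2l //; nra.
Qed.

Definition addv_closed S := forall x y, S x -> S y -> S (x + y).

Lemma cone_projection_normal S p s :
  is_cone S -> addv_closed S -> S s ->
  (forall z, S z -> dotv (p - s) (p - s) <= dotv (p - z) (p - z)) ->
  (forall z, S z -> dotv (p - s) z <= 0) /\ dotv (p - s) s = 0.
Proof.
move=> coneS addS Ss smin.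
have normal z : S z -> dotv (p - s) z <= 0.
  move=> Sz; apply: no_descent_dotv_le0 => l /andP[l0 _].
  rewrite -addrA -opprD; apply/smin/addS => //; exact/coneS/ltW.
split => //; apply/eqP; rewrite eq_le normal //= -oppr_le0 -dotvNr.
apply: no_descent_dotv_le0 => l /andP[_ l1].
have -> : p - s - l *: - s = p - (1 - l) *: s by apply/rowP => i; rewrite !mxE; ring.
by apply/smin/coneS; rewrite // subr_ge0.
Qed.

End ConeProjection.

Section RowContinuity.
Variables (T : topologicalType) (R : realType).

Definition row_continuous k (f : T -> 'rV[R]_k) :=
  forall j, continuous (fun z => f z 0 j).

Lemma continuous_row_continuous k (f : T -> 'rV[R]_k) :
  continuous f -> row_continuous f.
Proof. by move=> cf j z; exact: (continuous_comp (cf z) (@coord_continuous _ _ _ 0 j _)). Qed.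

Lemma row_continuous_cst k (a : 'rV[R]_k) : row_continuous (fun=> a).
Proof. by move=> j; exact: cst_continuous. Qed.

Lemma row_continuousB k (f g : T -> 'rV[R]_k) :
  row_continuous f -> row_continuous g -> row_continuous (fun z => f z - g z).
Proof.
move=> cf cg j; under eq_fun do rewrite !mxE.
by move=> z; apply: continuousB; [exact: cf | exact: cg].
Qed.

Lemma continuous_sum k (F : 'I_k -> T -> R) :
  (forall i, continuous (F i)) -> continuous (fun z => \sum_(i < k) F i z).
Proof. by move=> cF; apply: continuous_big => //; exact: add_continuous. Qed.

Lemma row_continuous_mulmx k l (f : T -> 'rV[R]_k) (M : 'M[R]_(k, l)) :
  row_continuous f -> row_continuous (fun z => f z *m M).
Proof.
move=> cf j; under eq_fun do rewrite mxE.
by apply: continuous_sum => i z; apply: continuousM; [exact: cf | exact: cst_continuous].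
Qed.

Lemma continuous_dotv k (f g : T -> 'rV[R]_k) :
  row_continuous f -> row_continuous g -> continuous (fun z => dotv (f z) (g z)).
Proof.
by move=> cf cg; apply: continuous_sum => i z; apply: continuousM; [exact: cf | exact: cg].
Qed.

Lemma closed_nonneg (f : T -> R) : continuous f -> closed [set z | 0 <= f z].
Proof.
move=> cf; rewrite -[X in closed X]/(f @^-1` [set x | 0 <= x]).
by apply: closed_comp => [z _|]; [exact: cf | exact: closed_ge].
Qed.

Lemma sublevel_compact_min (f : T -> R) (D B : set T) z0 :
  continuous f -> D z0 -> compact (D `&` B) ->
  (forall z, D z -> f z <= f z0 -> B z) ->
  exists2 z, D z & forall z', D z' -> f z <= f z'.
Proof.
move=> cf Dz0 cDB sub.
have Bz0 : B z0 by apply: sub.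
have [z /[!inE] -[Dz _] zmin] :=
  compact_EVT_min (ex_intro _ z0 (conj Dz0 Bz0)) cDB (continuous_subspaceT cf).
exists z => // z' Dz'; have [fz'|/ltW fz0] := leP (f z') (f z0).
  by apply/zmin; rewrite inE; split => //; exact: sub.
by apply: le_trans fz0; apply/zmin; rewrite inE.
Qed.

End RowContinuity.

Lemma continuous_fst (U V : topologicalType) : continuous (@fst U V).
Proof. by move=> [? ?]; exact: cvg_fst. Qed.

Lemma continuous_snd (U V : topologicalType) : continuous (@snd U V).
Proof. by move=> [? ?]; exact: cvg_snd. Qed.

Lemma compact_dotv_ball (R : realType) k (C : R) :
  compact [set x : 'rV[R]_k | dotv x x <= C].
Proof.
apply: bounded_closed_compact.
  exists (Num.sqrt C); split; first by rewrite num_real.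
  move=> M CM x /= xC; apply: le_trans (mx_norm_le_vnorm x) _.
  exact: ltW (le_lt_trans (ler_wsqrtr xC) CM).
have -> : [set x : 'rV[R]_k | dotv x x <= C] = [set x | 0 <= C - dotv x x].
  by apply/seteqP; split => x /=; rewrite subr_ge0.
apply: closed_nonneg => x.
apply: (@continuousB _ _ _ (fun=> C) (fun x => dotv x x)); first exact: cst_continuous.
by apply: continuous_dotv => j; exact: coord_continuous.
Qed.

Section Cones.
Variables (R : realType) (n : nat) (K : set 'rV[R]_n).

Lemma convex_cone_addv_closed : is_cone K -> is_convex K -> addv_closed K.
Proof.
move=> coneK convK x y Kx Ky.
have half : 0 <= (2^-1 : R) <= 1 by rewrite invr_ge0 ler0n invf_le1 ?ler1n.
have := coneK _ 2 (convK x y _ Kx Ky half) (ler0n _ 2).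
have -> : 1 - 2^-1 = 2^-1 :> R by field.
by rewrite scalerDr !scalerA mulfV // !scale1r.
Qed.

Lemma dual_coneD x y : dual_cone K x -> dual_cone K y -> dual_cone K (x + y).
Proof. by move=> Kx Ky z Kz; rewrite dotvDr addr_ge0 //; [exact: Kx | exact: Ky]. Qed.

Lemma dual_coneZ a x : 0 <= a -> dual_cone K x -> dual_cone K (a *: x).
Proof. by move=> a0 Kx z Kz; rewrite dotvZr mulr_ge0 //; exact: Kx. Qed.

Lemma dual_cone0 : dual_cone K 0.
Proof. by move=> z _; rewrite dotv0r. Qed.

Lemma closed_dual_cone_preimage (T : topologicalType) (h : T -> 'rV[R]_n) :
  row_continuous h -> closed [set z | dual_cone K (h z)].
Proof.
move=> ch; rewrite -[X in closed X]/(\bigcap_(x in K) [set z | 0 <= dotv x (h z)]).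
apply: closed_bigI => x _; apply: closed_nonneg.
by apply: continuous_dotv => //; exact: row_continuous_cst.
Qed.

Lemma closed_nearest_point (p x0 : 'rV[R]_n) : closed K -> K x0 ->
  exists2 s, K s & forall z, K z -> dotv (p - s) (p - s) <= dotv (p - z) (p - z).
Proof.
move=> cK Kx0; set C := vnorm p + vnorm (p - x0).
have C0 : 0 <= C by rewrite addr_ge0 ?vnorm_ge0.
apply: (@sublevel_compact_min _ _ _ _ [set z | dotv z z <= C ^+ 2] x0) => //.
- apply: continuous_dotv; apply: row_continuousB => //;
    (exact: row_continuous_cst || by move=> j; exact: coord_continuous).
- by rewrite setIC; apply: compact_closedI => //; exact: compact_dotv_ball.
move=> z _ /=; rewrite -vnorm_le // -!vnorm_sqr ler_sqr ?nnegrE ?vnorm_ge0 // => pz.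
have -> : z = p - (p - z) by rewrite opprB addrC subrK.
by apply: le_trans (vnormD _ _) _; rewrite vnormN lerD2l.
Qed.

Lemma dual_dual_cone_sub :
  closed K -> is_convex K -> is_cone K -> K !=set0 -> dual_cone (dual_cone K) `<=` K.
Proof.
move=> cK convK coneK [x0 Kx0] p Kp.
have [s Ks smin] := closed_nearest_point p cK Kx0.
have [normal orth] := cone_projection_normal coneK (convex_cone_addv_closed coneK convK) Ks smin.
set e := p - s in normal orth.
have Ke : dual_cone K (- e).
  by move=> x Kx; rewrite dotvNr dotvC oppr_ge0; exact: normal.
have ee : dotv e e <= 0.
  have -> : dotv e e = dotv e p by rewrite {2}/e dotvBr orth subr0.
  by rewrite -oppr_ge0 -dotvNl; exact: Kp.
have /eqP : e = 0 by apply: dotvv_eq0; apply/eqP; rewrite eq_le ee dotvv_ge0.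
by rewrite subr_eq0 => /eqP ->.
Qed.

End Cones.

Section Distance.
Variables (R : realType) (n : nat) (S : set 'rV[R]_n).

Lemma dist_set_ge0 w : 0 <= dist_set S w.
Proof.
rewrite /dist_set; have [->|/set0P ne] := eqVneq [set vnorm (w - z) | z in S] set0.
  by rewrite inf0.
by apply: lb_le_inf => // _ [z _ <-]; exact: vnorm_ge0.
Qed.

Lemma dist_set_le w z : S z -> dist_set S w <= vnorm (w - z).
Proof.
move=> Sz; apply: ge_inf; last by exists z.
by exists 0 => _ [z' _ <-]; exact: vnorm_ge0.
Qed.

End Distance.

Section Condition.
Variables (R : realType) (n m : nat) (A : 'M[R]_(n, m)) (b : 'rV[R]_m).
Variable K : set 'rV[R]_n.

Lemma cond_ge0 : 0 <= cond A b K.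
Proof.
rewrite /cond; set S := [set _ | _ in _].
have [->|/set0P ne] := eqVneq S set0; first by rewrite inf0.
by apply: lb_le_inf => // _ [u _ <-]; rewrite le_max dist_set_ge0.
Qed.

Lemma cond_le_unit u : vnorm u = 1 ->
  cond A b K <= Num.max (dist_set (dual_cone K) (u *m A^T)) (dotv b u).
Proof.
move=> u1; apply: ge_inf; last by exists u.
by exists 0 => _ [u' _ <-]; rewrite le_max dist_set_ge0.
Qed.

Lemma cond_mul_vnorm_le y v : dual_cone K (v - y *m A^T) ->
  cond A b K * vnorm y <= Num.max (vnorm v) (- dotv b y).
Proof.
move=> Kvy; have [->|y0] := eqVneq y 0; first by rewrite vnorm0 mulr0 le_max vnorm_ge0.
have ny0 : 0 < vnorm y by rewrite lt_def vnorm_ge0 andbT; apply: contra_neq y0 => /vnorm_eq0.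
have iy0 : 0 <= (vnorm y)^-1 by rewrite invr_ge0 ltW.
(* compare the distance of u A^T to K^* with that to the point (v - y A^T)/|y| of K^* *)
set u := - (vnorm y)^-1 *: y.
have u1 : vnorm u = 1 by rewrite vnormZ normrN ger0_norm // mulVf // gt_eqF.
have dist_u : dist_set (dual_cone K) (u *m A^T) <= (vnorm y)^-1 * vnorm v.
  apply: le_trans (dist_set_le _ (dual_coneZ iy0 Kvy)) _.
  have -> : u *m A^T - (vnorm y)^-1 *: (v - y *m A^T) = - (vnorm y)^-1 *: v.
    by rewrite /u -scalemxAl; apply/rowP => i; rewrite !mxE; ring.
  by rewrite vnormZ normrN ger0_norm.
have bu : dotv b u = (vnorm y)^-1 * - dotv b y by rewrite dotvZr mulNr mulrN.
have : cond A b K <= (vnorm y)^-1 * Num.max (vnorm v) (- dotv b y).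
  apply: le_trans (cond_le_unit u1) _; rewrite ge_max; apply/andP; split.
    by apply: le_trans dist_u _; rewrite ler_wpM2l // le_max lexx.
  by rewrite bu ler_wpM2l // le_max lexx orbT.
by rewrite ler_pdivlMl // mulrC.
Qed.

End Condition.

Section DualImageCone.
Variables (R : realType) (n m : nat) (A : 'M[R]_(n, m)) (b : 'rV[R]_m).
Variable K : set 'rV[R]_n.

Definition dual_domain : set ('rV[R]_m * 'rV[R]_n * R) :=
  [set p | dual_cone K (p.1.2 - p.1.1 *m A^T) /\ 0 <= p.2].

Definition dual_point (p : 'rV[R]_m * 'rV[R]_n * R) : 'rV[R]_(n + 1) :=
  rV_pair p.1.2 (dotv b p.1.1 - p.2).

Definition dual_image_cone := dual_point @` dual_domain.

Lemma dual_image_cone_cone : is_cone dual_image_cone.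
Proof.
move=> _ a [[[y v] r] [Kvy r0] <-] a0; exists (a *: y, a *: v, a * r).
  by split; [rewrite /= -scalemxAl -scalerBr; exact: dual_coneZ | exact: mulr_ge0].
by rewrite /dual_point /= rV_pairZ dotvZr mulrBr.
Qed.

Lemma dual_image_cone_addv_closed : addv_closed dual_image_cone.
Proof.
move=> _ _ [[[y v] r] [Kvy r0] <-] [[[y' v'] r'] [Kvy' r0'] <-].
exists (y + y', v + v', r + r').
  by split; [rewrite /= mulmxDl opprD addrACA; exact: dual_coneD | exact: addr_ge0].
by rewrite /dual_point /= rV_pairD dotvDr; congr rV_pair; ring.
Qed.

Lemma dual_image_coneP c t :
  dual_image_cone (rV_pair c t) -> exists2 y, dual_feas A c K y & t <= dotv b y.
Proof.
move=> [[[y v] r] [/= Kvy r0] /rV_pair_inj[/= <- <-]].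
by exists y; rewrite // lerBlDr lerDl.
Qed.

Lemma dist2_dual_point c t p :
  dotv (rV_pair c t - dual_point p) (rV_pair c t - dual_point p) =
  dotv (c - p.1.2) (c - p.1.2) + (t - (dotv b p.1.1 - p.2)) ^+ 2.
Proof. by rewrite rV_pairB dotv_pair expr2. Qed.

Lemma row_continuous_dual_y : row_continuous (fun p : 'rV[R]_m * 'rV[R]_n * R => p.1.1).
Proof.
apply: continuous_row_continuous => p.
exact: continuous_comp (@continuous_fst _ _ p) (@continuous_fst _ _ p.1).
Qed.

Lemma row_continuous_dual_v : row_continuous (fun p : 'rV[R]_m * 'rV[R]_n * R => p.1.2).
Proof.
apply: continuous_row_continuous => p.
exact: continuous_comp (@continuous_fst _ _ p) (@continuous_snd _ _ p.1).
Qed.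

Lemma closed_dual_domain : closed dual_domain.
Proof.
apply: closedI; last exact/closed_nonneg/continuous_snd.
apply/closed_dual_cone_preimage/row_continuousB/row_continuous_mulmx.
  exact: row_continuous_dual_v.
exact: row_continuous_dual_y.
Qed.

Lemma continuous_dist2_dual_point c t :
  continuous (fun p => dotv (rV_pair c t - dual_point p) (rV_pair c t - dual_point p)).
Proof.
under eq_fun do rewrite dist2_dual_point.
have cb := continuous_dotv (@row_continuous_cst _ _ _ b) row_continuous_dual_y.
have ct : continuous (fun p : 'rV[R]_m * 'rV[R]_n * R => t - (dotv b p.1.1 - p.2)).
  move=> p; apply: (@continuousB _ _ _ (fun=> t) (fun p => dotv b p.1.1 - p.2)).
    exact: cst_continuous.
  exact: continuousB (cb p) (@continuous_snd _ _ p).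
have cv := row_continuousB (@row_continuous_cst _ _ _ c) row_continuous_dual_v.
have cvv := continuous_dotv cv cv.
by move=> p; exact: continuousD (cvv p) (continuousM (ct p) (ct p)).
Qed.

Lemma dual_sublevel_bound c t rho y v r :
  dual_cone K (v - y *m A^T) -> 0 <= r -> 0 <= rho ->
  dotv (c - v) (c - v) + (t - (dotv b y - r)) ^+ 2 <= rho ^+ 2 ->
  [/\ cond A b K * vnorm y <= vnorm c + rho + `|t|, vnorm v <= vnorm c + rho &
      r <= rho + `|t| + vnorm b * vnorm y].
Proof.
move=> Kvy r0 rho0 res_le.
have cv : vnorm (c - v) <= rho.
  by rewrite vnorm_le //; have := sqr_ge0 (t - (dotv b y - r)); lra.
have : `|t - (dotv b y - r)| <= rho.
  by rewrite -ler_sqr ?nnegrE // real_normK ?num_real //; have := dotvv_ge0 (c - v); lra.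
rewrite ler_norml => /andP[lo hi].
have tt : - `|t| <= t <= `|t| by rewrite -ler_norml.
have hv : vnorm v <= vnorm c + rho.
  have -> : v = c - (c - v) by rewrite opprB addrC subrK.
  by apply: le_trans (vnormD _ _) _; rewrite vnormN lerD2l.
split => //.
- apply: le_trans (cond_mul_vnorm_le b Kvy) _; rewrite ge_max; apply/andP; split.
    by have := normr_ge0 t; lra.
  by have := vnorm_ge0 c; lra.
- by have := cauchy_schwarz b y; lra.
Qed.

Lemma dual_image_cone_nearest c t :
  closed K -> 0 < cond A b K -> (exists y0, dual_feas A c K y0) ->
  exists2 s, dual_image_cone s & forall z, dual_image_cone z ->
    dotv (rV_pair c t - s) (rV_pair c t - s) <= dotv (rV_pair c t - z) (rV_pair c t - z).
Proof.
move=> cK cond_gt0 [y0 Ky0].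
set rho := `|t - dotv b y0|.
set B1 := (vnorm c + rho + `|t|) / cond A b K.
set B2 := vnorm c + rho.
set B3 := rho + `|t| + vnorm b * B1.
pose box := [set y : 'rV[R]_m | dotv y y <= B1 ^+ 2] `*`
  [set v : 'rV[R]_n | dotv v v <= B2 ^+ 2] `*` `[0, B3].
have rho0 : 0 <= rho := normr_ge0 _.
have B1_ge0 : 0 <= B1 by rewrite divr_ge0 ?(ltW cond_gt0) // !addr_ge0 ?vnorm_ge0.
pose res p := dotv (rV_pair c t - dual_point p) (rV_pair c t - dual_point p).
suff [p Dp pmin] : exists2 p, dual_domain p & forall p', dual_domain p' -> res p <= res p'.
  by exists (dual_point p); [exists p | move=> _ [p' Dp' <-]; exact: pmin].
apply: (@sublevel_compact_min _ _ res dual_domain box (y0, c, 0)) => //.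
- exact: continuous_dist2_dual_point.
- rewrite setIC; apply: compact_closedI; last exact: closed_dual_domain.
  apply: compact_setX; last exact: segment_compact.
  by apply: compact_setX; exact: compact_dotv_ball.
move=> [[y v] r] [/= Kvy r0]; rewrite /res !dist2_dual_point /= subrr dotv0l add0r subr0.
rewrite -(real_normK (num_real (t - dotv b y0))) -/rho => res_le.
have [hy hv hr] := dual_sublevel_bound Kvy r0 rho0 res_le.
have hy' : vnorm y <= B1 by rewrite ler_pdivlMr // mulrC.
split; [split|] => /=.
- by rewrite -vnorm_le.
- by rewrite -vnorm_le // addr_ge0 ?vnorm_ge0.
- by rewrite in_itv /= r0; apply: le_trans hr _; rewrite lerD2l ler_wpM2l ?vnorm_ge0.
Qed.

End DualImageCone.

Section ConicDuality.
Variables (R : realType) (n m : nat) (A : 'M[R]_(n, m)) (b : 'rV[R]_m) (c : 'rV[R]_n).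
Variable K : set 'rV[R]_n.
Hypotheses (closedK : closed K) (convexK : is_convex K) (coneK : is_cone K).

Lemma conic_farkas t : K !=set0 -> 0 < cond A b K -> (exists y, dual_feas A c K y) ->
  dual_image_cone A b K (rV_pair c t) \/
  exists x beta, [/\ K x, x *m A = beta *: b, 0 <= beta & dotv c x < beta * t].
Proof.
move=> K0 cond_gt0 dual_feasible.
have [s Ss smin] := dual_image_cone_nearest t closedK cond_gt0 dual_feasible.
have [normal orth] := cone_projection_normal (@dual_image_cone_cone _ _ _ A b K)
  (@dual_image_cone_addv_closed _ _ _ A b K) Ss smin.
have [->|ps] := eqVneq (rV_pair c t) s; [by left | right].
have [[[y v] r] _ sE] := Ss.
set e := c - v; set beta := t - (dotv b y - r).
have pE : rV_pair c t - s = rV_pair e beta by rewrite -sE rV_pairB.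
rewrite pE in normal orth.
have normal_at y' v' r' : dual_cone K (v' - y' *m A^T) -> 0 <= r' ->
    dotv e v' + beta * (dotv b y' - r') <= 0.
  by move=> Kvy r0; rewrite -dotv_pair; apply: normal; exists (y', v', r').
have eA : e *m A = - (beta *: b).
  set w := e *m A + beta *: b.
  have : dotv w w <= 0.
    have := normal_at w (w *m A^T) 0; rewrite subrr subr0 => /(_ (@dual_cone0 _ _ K) (lexx 0)).
    by rewrite -dotv_mulmx -dotvZl -dotvDl.
  move=> ww; apply/eqP; rewrite -subr_eq0 opprK -/w.
  by apply/eqP/dotvv_eq0/eqP; rewrite eq_le ww dotvv_ge0.
have Ke : K (- e).
  apply: dual_dual_cone_sub => // u Ku; rewrite dotvNr oppr_ge0 dotvC.
  by have := normal_at 0 u 0; rewrite mul0mx subr0 dotv0r subrr mulr0 addr0; apply.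
have beta_ge0 : 0 <= beta.
  have := normal_at 0 0 1; rewrite mul0mx subrr dotv0r dotv0r add0r sub0r mulrN1.
  by rewrite oppr_le0; apply; [exact: dual_cone0 | exact: ler01].
have : 0 < dotv e c + beta * t.
  have -> : dotv e c + beta * t = dotv (rV_pair e beta) (rV_pair e beta).
    by rewrite -[X in _ = dotv _ X]pE dotvBr orth subr0 dotv_pair.
  rewrite lt_def dotvv_ge0 andbT; apply: contra_neq ps => /dotvv_eq0 /eqP.
  by rewrite -pE subr_eq0 => /eqP.
exists (- e), beta; split => //; first by rewrite mulNmx eA opprK.
by rewrite dotvNr dotvC; lra.
Qed.

Lemma primal_feas_below x0 x beta t :
  primal_feas A b K x0 -> K x -> x *m A = beta *: b -> 0 <= beta -> dotv c x < beta * t ->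
  exists2 x', primal_feas A b K x' & dotv c x' < t.
Proof.
move=> [x0A Kx0] Kx xA beta_ge0 cx; have [beta_gt0|beta_le0] := ltP 0 beta.
  exists (beta^-1 *: x); last by rewrite dotvZr ltr_pdivrMl.
  split; first by rewrite -scalemxAl xA scalerA mulVf ?gt_eqF // scale1r.
  by apply: coneK; rewrite // invr_ge0 ltW.
have beta0 : beta = 0 by apply/eqP; rewrite eq_le beta_le0.
rewrite beta0 mul0r in cx; rewrite beta0 scale0r in xA.
(* x is a recession direction of decreasing cost: walk far enough along it from x0 *)
set lam := (`|dotv c x0 - t| + 1) / - dotv c x.
have lam_ge0 : 0 <= lam by rewrite divr_ge0 ?addr_ge0 // oppr_ge0 ltW.
exists (x0 + lam *: x).
  split; first by rewrite mulmxDl -scalemxAl xA scaler0 addr0.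
  exact: (convex_cone_addv_closed coneK convexK Kx0 (coneK Kx lam_ge0)).
have -> : dotv c (x0 + lam *: x) = dotv c x0 - (`|dotv c x0 - t| + 1).
  by rewrite dotvDr dotvZr /lam invrN mulrN mulNr divfK ?lt_eqF.
by have := ler_norm (dotv c x0 - t); lra.
Qed.

Lemma primal_val_le_dual_optimal y :
  primal_feas A b K !=set0 -> has_lbound [set dotv c x | x in primal_feas A b K] ->
  0 < cond A b K -> dual_optimal A b c K y -> primal_val A b c K <= dotv b y.
Proof.
move=> [x0 Fx0] lb cond_gt0 [yfeas yopt].
have val_le x : primal_feas A b K x -> primal_val A b c K <= dotv c x.
  by move=> Fx; apply: ge_inf => //; exists x.
rewrite leNgt; apply/negP => gap; set t := (dotv b y + primal_val A b c K) / 2.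
have K0 : K !=set0 by case: Fx0 => _ Kx0; exists x0.
have [/dual_image_coneP[y' y'feas ty']|[x [beta [Kx xA beta_ge0 cx]]]] :=
  conic_farkas t K0 cond_gt0 (ex_intro _ y yfeas).
  by have := yopt y' y'feas; rewrite /t in ty'; lra.
have [x' Fx' cx'] := primal_feas_below Fx0 Kx xA beta_ge0 cx.
by have := val_le x' Fx'; rewrite /t in cx'; lra.
Qed.

End ConicDuality.

Theorem mainTheorem6 (R : realType) (n m : nat) (A : 'M[R]_(n, m))
  (b : 'rV[R]_m) (c : 'rV[R]_n) (K : set 'rV[R]_n)
  (hb : exists x0 : 'rV[R]_n, x0 *m A = b)
  (hKclosed : closed K) (hKconvex : is_convex K) (hKcone : is_cone K)
  (hKint : K° !=set0)
  (hfeas : primal_feas A b K !=set0)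
  (hfinite : has_lbound [set dotv c x | x in primal_feas A b K])
  (hcond : cond A b K != 0)
  (y : 'rV[R]_m) (hy : dual_optimal A b c K y) :
  vnorm y <= Num.max (vnorm c) (- primal_val A b c K) / cond A b K.
Proof.
have cond_gt0 : 0 < cond A b K by rewrite lt_def hcond cond_ge0.
have no_gap := primal_val_le_dual_optimal hKclosed hKconvex hKcone hfeas hfinite cond_gt0 hy.
have [yfeas _] := hy.
rewrite ler_pdivlMr // mulrC; apply: le_trans (cond_mul_vnorm_le b yfeas) _.
by rewrite ge_max !le_max lexx lerN2 no_gap orbT.
Qed.
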